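(* Let $S\subset\mathbb{R}^2$ be a finite set of points in general position, let $f:\mathbb{R}^2\times[0,1]\to\mathbb{R}^2$ be an ambient isotopy, and let $S(t)=\{f(s,t): s\in S\}$ for $t\in[0,1]$. Suppose there is $t_0\in(0,1]$ such that $S(t)$ is in general position for all $t\in[0,t_0)$, and such that in $S(t_0)$ the triple $\{f(a,t_0),f(b,t_0),f(c,t_0)\}$ for distinct $a,b,c\in S$ is collinear and is the only collinear triple. If $f(c,t_0)$ lies on the segment between $f(a,t_0)$ and $f(b,t_0)$, then $ab$ is an exit edge of $S=S(0)$ with witness $c$.
   Context: General position: no three points collinear. An ambient isotopy of $\mathbb{R}^2$ is a continuous map $f:\mathbb{R}^2\times[0,1]\to\mathbb{R}^2$ such that $f(\cdot,t)$ is a homeomorphism for every $t$ and $f(\cdot,0)$ is the identity. For distinct $a,b,c\in S$, the segment $ab$ is an exit edge of $S$ with witness $c$ if there is no $p\in S$ such that the line through $a$ and $p$ strictly separates $b$ from $c$, and there is no $p\in S$ such that the line through $b$ and $p$ strictly separates $a$ from $c$. *)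

From Stdlib Require Import Reals List.
Import ListNotations.
Open Scope R_scope.

Definition point := (R * R)%type.

Definition orient (a p x : point) : R :=
  (fst p - fst a) * (snd x - snd a) - (snd p - snd a) * (fst x - fst a).

Definition collinear (p q r : point) : Prop := orient p q r = 0.

Definition general_position (S : list point) : Prop :=
  forall p q r, In p S -> In q S -> In r S ->
    p <> q -> q <> r -> p <> r -> ~ collinear p q r.

Definition continuous2 (h : point -> point) : Prop :=
  forall x eps, 0 < eps -> exists delta, 0 < delta /\
    forall y, Rabs (fst y - fst x) < delta -> Rabs (snd y - snd x) < delta ->
      Rabs (fst (h y) - fst (h x)) < eps /\ Rabs (snd (h y) - snd (h x)) < eps.

Definition homeomorphism (h : point -> point) : Prop :=
  exists g : point -> point,
    (forall x, g (h x) = x) /\ (forall y, h (g y) = y) /\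
    continuous2 h /\ continuous2 g.

Definition continuous_on_R2_I (f : point -> R -> point) : Prop :=
  forall x t, 0 <= t <= 1 -> forall eps, 0 < eps -> exists delta, 0 < delta /\
    forall y s, 0 <= s <= 1 ->
      Rabs (fst y - fst x) < delta -> Rabs (snd y - snd x) < delta ->
      Rabs (s - t) < delta ->
      Rabs (fst (f y s) - fst (f x t)) < eps /\
      Rabs (snd (f y s) - snd (f x t)) < eps.

Definition ambient_isotopy (f : point -> R -> point) : Prop :=
  continuous_on_R2_I f /\
  (forall t, 0 <= t <= 1 -> homeomorphism (fun x => f x t)) /\
  (forall x, f x 0 = x).

Definition St (f : point -> R -> point) (S : list point) (t : R) : list point :=
  map (fun s => f s t) S.

Definition on_segment (x p q : point) : Prop :=
  exists l, 0 <= l <= 1 /\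
    x = ((1 - l) * fst p + l * fst q, (1 - l) * snd p + l * snd q).

(* the line through u and p strictly separates x from y *)
Definition strictly_separates (u p x y : point) : Prop :=
  orient u p x * orient u p y < 0.

Definition exit_edge (S : list point) (a b c : point) : Prop :=
  a <> b /\ b <> c /\ a <> c /\ In a S /\ In b S /\ In c S /\
  (~ exists p, In p S /\ strictly_separates a p b c) /\
  (~ exists p, In p S /\ strictly_separates b p a c).

From Stdlib Require Import Reals List Lra.
Import ListNotations.
Open Scope R_scope.

(* For distinct x, y, z in S the orientation
   s |-> orient (f x s) (f y s) (f z s) is continuous on [0, t0] and, by
   general position of S(s), never vanishes on [0, t0).  By the intermediate
   value theorem it therefore has the same sign at 0 and at t0 whenever it
   is nonzero at t0, which is the case as soon as the triple is not
   {a, b, c}.  Now let p be any point of S other than a, b, c.  At time t0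
   the point c' = f c t0 lies on the segment [a', b'], so orient a' p' c' is
   a nonnegative multiple of orient a' p' b'; hence b' and c' are on the same
   side of the line a'p', and by sign preservation b and c are on the same
   side of the line ap.  The same argument with the roles of a and b swapped
   handles lines through b, and for p in {a, b, c} the orientations vanish. *)

Lemma point_eq_dec (p q : point) : {p = q} + {p <> q}.
Proof. decide equality; apply Req_dec_T. Defined.

Lemma orient_base_repeated a p : orient a a p = 0.
Proof. unfold orient; ring. Qed.

Lemma orient_end_repeated a p : orient a p p = 0.
Proof. unfold orient; ring. Qed.

Lemma same_sign_transfer u0 u1 v0 k :
  0 <= k -> 0 < u0 * u1 -> 0 < v0 * (k * u1) -> 0 < u0 * v0.
Proof.
  intros Hk Hu Hv.
  assert (Hsq : 0 <= k * (u1 * u1)) by (apply Rmult_le_pos; [lra | apply Rle_0_sqr]).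
  assert (Hprod : 0 < (u0 * v0) * (k * (u1 * u1))).
  { replace ((u0 * v0) * (k * (u1 * u1))) with ((u0 * u1) * (v0 * (k * u1))) by ring.
    now apply Rmult_lt_0_compat. }
  destruct (Rlt_dec 0 (u0 * v0)) as [Hpos | Hnpos]; [exact Hpos |].
  exfalso; nra.
Qed.

Lemma no_root_same_sign (U : R -> R) t0 :
  continuity U -> 0 <= t0 -> (forall s, 0 <= s <= t0 -> U s <> 0) ->
  0 < U 0 * U t0.
Proof.
  intros HU Ht0 Hnz.
  destruct (Rlt_dec 0 (U 0 * U t0)) as [Hpos | Hnpos]; [exact Hpos |].
  destruct (IVT_cor U 0 t0 HU Ht0 ltac:(lra)) as [s [Hs Hs0]].
  exfalso; exact (Hnz s Hs Hs0).
Qed.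

(* Clamping to [0, t0] turns a path defined on [0, t0] into a path defined
   on all of R, so that the Stdlib notion of continuity applies. *)
Definition clamp (t0 s : R) : R := Rmax 0 (Rmin s t0).

Lemma clamp_range t0 s : 0 < t0 -> 0 <= clamp t0 s <= t0.
Proof. intros; unfold clamp, Rmax, Rmin; repeat destruct Rle_dec; lra. Qed.

Lemma clamp_id t0 s : 0 <= s <= t0 -> clamp t0 s = s.
Proof. intros; unfold clamp, Rmax, Rmin; repeat destruct Rle_dec; lra. Qed.

Lemma clamp_lipschitz t0 s t :
  0 < t0 -> Rabs (clamp t0 s - clamp t0 t) <= Rabs (s - t).
Proof.
  intros; unfold clamp, Rmax, Rmin; repeat destruct Rle_dec;
  unfold Rabs; repeat destruct Rcase_abs; lra.
Qed.

Lemma clamped_trajectory_continuous (f : point -> R -> point) t0 x :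
  continuous_on_R2_I f -> 0 < t0 <= 1 ->
  continuity (fun s => fst (f x (clamp t0 s))) /\
  continuity (fun s => snd (f x (clamp t0 s))).
Proof.
  intros Hc Ht0.
  assert (Hclose : forall t eps, 0 < eps -> exists d, 0 < d /\ forall s,
    Rabs (s - t) < d ->
    Rabs (fst (f x (clamp t0 s)) - fst (f x (clamp t0 t))) < eps /\
    Rabs (snd (f x (clamp t0 s)) - snd (f x (clamp t0 t))) < eps).
  { intros t eps Heps.
    pose proof (clamp_range t0 t ltac:(lra)) as Hrt.
    destruct (Hc x (clamp t0 t) ltac:(lra) eps Heps) as [d [Hd Hnear]].
    exists d; split; [exact Hd |]; intros s Hs.
    pose proof (clamp_range t0 s ltac:(lra)) as Hrs.
    pose proof (clamp_lipschitz t0 s t ltac:(lra)) as Hlip.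
    apply Hnear; [lra | rewrite Rminus_diag, Rabs_R0; exact Hd
                 | rewrite Rminus_diag, Rabs_R0; exact Hd | lra]. }
  split; intros t eps Heps; destruct (Hclose t eps Heps) as [d [Hd Hnear]];
    exists d; split; try exact Hd; intros s [_ Hs]; apply Hnear, Hs.
Qed.

Lemma orient_path_continuous (f : point -> R -> point) t0 x y z :
  continuous_on_R2_I f -> 0 < t0 <= 1 ->
  continuity (fun s =>
    orient (f x (clamp t0 s)) (f y (clamp t0 s)) (f z (clamp t0 s))).
Proof.
  intros Hc Ht0.
  destruct (clamped_trajectory_continuous f t0 x Hc Ht0) as [X1 X2].
  destruct (clamped_trajectory_continuous f t0 y Hc Ht0) as [Y1 Y2].
  destruct (clamped_trajectory_continuous f t0 z Hc Ht0) as [Z1 Z2].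
  unfold orient.
  apply continuity_minus; apply continuity_mult; apply continuity_minus; assumption.
Qed.

Lemma isotopy_slice_injective (f : point -> R -> point) t x y :
  ambient_isotopy f -> 0 <= t <= 1 -> f x t = f y t -> x = y.
Proof.
  intros [_ [Hhomeo _]] Ht Exy. destruct (Hhomeo t Ht) as [g [Hg _]].
  rewrite <- (Hg x), <- (Hg y). simpl. now rewrite Exy.
Qed.

Lemma in_St (f : point -> R -> point) S t x : In x S -> In (f x t) (St f S t).
Proof. intros Hx; unfold St; now apply (in_map (fun q => f q t)). Qed.

Section SignPreservation.

Variables (S : list point) (f : point -> R -> point) (t0 : R).
Hypothesis Hf : ambient_isotopy f.
Hypothesis Ht0 : 0 < t0 <= 1.
Hypothesis Hgp : forall t, 0 <= t < t0 -> general_position (St f S t).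

Lemma orient_nonzero_before x y z s :
  In x S -> In y S -> In z S -> x <> y -> y <> z -> x <> z -> 0 <= s < t0 ->
  orient (f x s) (f y s) (f z s) <> 0.
Proof.
  intros Hx Hy Hz Hxy Hyz Hxz Hs.
  assert (Hs1 : 0 <= s <= 1) by lra.
  apply (Hgp s Hs); try now apply in_St.
  - intro E; exact (Hxy (isotopy_slice_injective f s x y Hf Hs1 E)).
  - intro E; exact (Hyz (isotopy_slice_injective f s y z Hf Hs1 E)).
  - intro E; exact (Hxz (isotopy_slice_injective f s x z Hf Hs1 E)).
Qed.

Lemma orient_sign_preserved x y z :
  In x S -> In y S -> In z S -> x <> y -> y <> z -> x <> z ->
  orient (f x t0) (f y t0) (f z t0) <> 0 ->
  0 < orient x y z * orient (f x t0) (f y t0) (f z t0).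
Proof.
  intros Hx Hy Hz Hxy Hyz Hxz Hend.
  set (U := fun s =>
    orient (f x (clamp t0 s)) (f y (clamp t0 s)) (f z (clamp t0 s))).
  assert (HU_at : forall s, 0 <= s <= t0 -> U s = orient (f x s) (f y s) (f z s))
    by (intros s Hs; unfold U; now rewrite clamp_id).
  assert (Hsign : 0 < U 0 * U t0).
  { apply no_root_same_sign; [exact (orient_path_continuous f t0 x y z (proj1 Hf) Ht0) | lra |].
    intros s Hs. rewrite HU_at by exact Hs.
    destruct (Req_dec s t0) as [-> | Hne]; [exact Hend |].
    apply orient_nonzero_before; auto; lra. }
  rewrite HU_at, HU_at in Hsign by lra.
  destruct Hf as [_ [_ Hid]]. now rewrite !Hid in Hsign.
Qed.

Lemma line_does_not_separate u p r c k :
  In u S -> In p S -> In r S -> In c S ->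
  u <> p -> p <> r -> u <> r -> p <> c -> u <> c -> 0 <= k ->
  orient (f u t0) (f p t0) (f c t0) = k * orient (f u t0) (f p t0) (f r t0) ->
  orient (f u t0) (f p t0) (f r t0) <> 0 ->
  orient (f u t0) (f p t0) (f c t0) <> 0 ->
  ~ strictly_separates u p r c.
Proof.
  intros Hu Hp Hr Hc Hup Hpr Hur Hpc Huc Hk Eray Hnr Hnc Hsep.
  pose proof (orient_sign_preserved u p r Hu Hp Hr Hup Hpr Hur Hnr) as Hsr.
  pose proof (orient_sign_preserved u p c Hu Hp Hc Hup Hpc Huc Hnc) as Hsc.
  rewrite Eray in Hsc.
  pose proof (same_sign_transfer _ _ _ _ Hk Hsr Hsc).
  unfold strictly_separates in Hsep; lra.
Qed.

Lemma no_separating_line u r c k :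
  In u S -> In r S -> In c S -> u <> r -> u <> c -> 0 <= k ->
  (forall p, orient (f u t0) (f p t0) (f c t0)
             = k * orient (f u t0) (f p t0) (f r t0)) ->
  (forall x p y, In x S -> In p S -> In y S -> x <> p -> p <> y -> x <> y ->
     p <> u -> p <> r -> p <> c -> orient (f x t0) (f p t0) (f y t0) <> 0) ->
  ~ exists p, In p S /\ strictly_separates u p r c.
Proof.
  intros Hu Hr Hc Hur Huc Hk Eray Hoff [p [Hp Hsep]].
  unfold strictly_separates in Hsep.
  destruct (point_eq_dec p u) as [-> | Hpu]; [rewrite orient_base_repeated in Hsep; lra |].
  destruct (point_eq_dec p r) as [-> | Hpr]; [rewrite orient_end_repeated in Hsep; lra |].
  destruct (point_eq_dec p c) as [-> | Hpc]; [rewrite orient_end_repeated in Hsep; lra |].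
  apply (line_does_not_separate u p r c k); auto.
Qed.

End SignPreservation.

Definition only_collinear_triple (S : list point) (f : point -> R -> point)
    (a b c : point) (t0 : R) : Prop :=
  forall p q r, In p (St f S t0) -> In q (St f S t0) -> In r (St f S t0) ->
    p <> q -> q <> r -> p <> r -> collinear p q r ->
    In p [f a t0; f b t0; f c t0] /\ In q [f a t0; f b t0; f c t0] /\
    In r [f a t0; f b t0; f c t0].

Lemma orient_nonzero_off_triple S (f : point -> R -> point) a b c t0 :
  (forall x y, f x t0 = f y t0 -> x = y) ->
  only_collinear_triple S f a b c t0 ->
  forall x p y, In x S -> In p S -> In y S -> x <> p -> p <> y -> x <> y ->
    p <> a -> p <> b -> p <> c -> orient (f x t0) (f p t0) (f y t0) <> 0.
Proof.
  intros Hinj Honly x p y Hx Hp Hy Hxp Hpy Hxy Hpa Hpb Hpc Hcol.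
  assert (Hmid : In (f p t0) [f a t0; f b t0; f c t0]).
  { apply (Honly (f x t0) (f p t0) (f y t0)); try now apply in_St.
    - intro E; exact (Hxp (Hinj _ _ E)).
    - intro E; exact (Hpy (Hinj _ _ E)).
    - intro E; exact (Hxy (Hinj _ _ E)).
    - exact Hcol. }
  simpl in Hmid.
  destruct Hmid as [E | [E | [E | []]]]; apply Hinj in E; subst; contradiction.
Qed.

Theorem proposition2 (S : list point) (f : point -> R -> point)
  (a b c : point) (t0 : R) :
  NoDup S ->
  general_position S ->
  ambient_isotopy f ->
  0 < t0 <= 1 ->
  (forall t, 0 <= t < t0 -> general_position (St f S t)) ->
  In a S -> In b S -> In c S -> a <> b -> b <> c -> a <> c ->
  collinear (f a t0) (f b t0) (f c t0) ->
  (forall p q r, In p (St f S t0) -> In q (St f S t0) -> In r (St f S t0) ->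
     p <> q -> q <> r -> p <> r -> collinear p q r ->
     In p [f a t0; f b t0; f c t0] /\ In q [f a t0; f b t0; f c t0] /\
     In r [f a t0; f b t0; f c t0]) ->
  on_segment (f c t0) (f a t0) (f b t0) ->
  exit_edge S a b c.
Proof.
  intros _ _ Hf Ht0 Hgp Ha Hb Hc Hab Hbc Hac _ Honly [l [Hl Hseg]].
  assert (Hinj : forall x y, f x t0 = f y t0 -> x = y)
    by (intros x y; apply isotopy_slice_injective; [exact Hf | lra]).
  pose proof (orient_nonzero_off_triple S f a b c t0 Hinj Honly) as Hoff.
  (* c' = (1 - l) a' + l b', so seen from a' it is l times b', and seen
     from b' it is (1 - l) times a'. *)
  assert (Ray_a : forall p, orient (f a t0) (f p t0) (f c t0)
                            = l * orient (f a t0) (f p t0) (f b t0)).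
  { intros p; rewrite Hseg; unfold orient; simpl; ring. }
  assert (Ray_b : forall p, orient (f b t0) (f p t0) (f c t0)
                            = (1 - l) * orient (f b t0) (f p t0) (f a t0)).
  { intros p; rewrite Hseg; unfold orient; simpl; ring. }
  unfold exit_edge; repeat split; try assumption.
  - apply (no_separating_line S f t0 Hf Ht0 Hgp a b c l Ha Hb Hc Hab Hac);
      [lra | exact Ray_a | intros; apply Hoff; auto].
  - apply (no_separating_line S f t0 Hf Ht0 Hgp b a c (1 - l) Hb Ha Hc
             (not_eq_sym Hab) Hbc);
      [lra | exact Ray_b | intros; apply Hoff; auto].
Qed.
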